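(* Let $2\le n\le m$ be integers with $\gamma_{2t}(K_n\Box K_m)<2n$. Then \[ \gamma_{2t}(K_n\Box K_m)\le\gamma_{2t}(K_{n+1}\Box K_m)\le\gamma_{2t}(K_n\Box K_m)+1. \]
   Context: For a graph $G=(V,E)$, a set $S\subseteq V$ is a total $2$-dominating set if every vertex of $V$ (including those in $S$) is adjacent to at least $2$ vertices of $S$; $\gamma_{2t}(G)$ is the minimum cardinality of such a set. $G\Box H$ denotes the Cartesian product: vertex set $V(G)\times V(H)$, with $(u_1,v_1)\sim(u_2,v_2)$ iff either $u_1=u_2$ and $v_1\sim v_2$, or $v_1=v_2$ and $u_1\sim u_2$. $K_n$ is the complete graph on $n$ vertices. *)

From mathcomp Require Import all_boot.
Set Implicit Arguments. Unset Strict Implicit. Unset Printing Implicit Defensive.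

Definition nbr_in (T : finType) (e : rel T) (S : {set T}) (v : T) : {set T} :=
  [set u in S | e v u].

Definition total2dom (T : finType) (e : rel T) (S : {set T}) : bool :=
  [forall v : T, 2 <= #|nbr_in e S v|].

(* gamma_{2t}: minimum cardinality of a total 2-dominating set.
   (If none exists, the value defaults to #|T|.+1; this never happens
   for the graphs considered below, where V itself is such a set.) *)
Definition gamma2t (T : finType) (e : rel T) : nat :=
  \big[minn/#|T|.+1]_(S : {set T} | total2dom e S) #|S|.

Definition K_rel (n : nat) : rel 'I_n := fun i j => i != j.

Definition cart_rel (A B : finType) (eA : rel A) (eB : rel B) : rel (A * B) :=
  fun x y => ((x.1 == y.1) && eB x.2 y.2) || ((x.2 == y.2) && eA x.1 y.1).

Definition gKK (n m : nat) : nat :=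
  gamma2t (cart_rel (@K_rel n) (@K_rel m)).

(* View a set S of vertices of K_p x K_q as a 0/1 matrix: the vertex (a, b) has
   #|row a \ b| + #|col b \ a| neighbours in S.  If |S| < 2p, some row of S has
   at most one entry.  Duplicating such a row of an optimal set for K_n x K_m
   gives a total 2-dominating set of K_(n+1) x K_m with at most one more vertex.
   Conversely, deleting a sparse row r of an optimal set for K_(n+1) x K_m with
   fewer than 2n vertices only hurts the vertices (i, c) with (r, c) in S; this
   is repaired by moving (r, c) into column c, which has a free place because a
   full column c together with one vertex in every other column (which row r
   cannot supply) would already use n + m >= 2n vertices. *)

From mathcomp Require Import all_boot zify.
Set Implicit Arguments. Unset Strict Implicit. Unset Printing Implicit Defensive.

Section Gamma2t.
Variables (T : finType) (e : rel T).

Lemma gamma2t_le (S : {set T}) : total2dom e S -> gamma2t e <= #|S|.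
Proof.
move=> domS; rewrite /gamma2t.
have: S \in index_enum {set T} by rewrite mem_index_enum.
elim: (index_enum _) => [//|S' s IHs]; rewrite inE big_cons.
case/orP => [/eqP <-|/IHs]; first by rewrite domS geq_minl.
by case: (total2dom e S') => // le_s; rewrite geq_min le_s orbT.
Qed.

Lemma gamma2t_attained : gamma2t e <= #|T| ->
  exists2 S : {set T}, total2dom e S & #|S| = gamma2t e.
Proof.
rewrite /gamma2t; elim/big_rec: _ => [|S x domS IH]; first by rewrite ltnn.
by rewrite /minn; case: ltnP => [_ _|_ /IH]; first exists S.
Qed.

Lemma nbr_inS (S U : {set T}) v : S \subset U -> nbr_in e S v \subset nbr_in e U v.
Proof. by move=> sSU; apply/subsetP => u; rewrite !inE => /andP[/(subsetP sSU) -> ->]. Qed.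

End Gamma2t.

Lemma card_preim_lift n (r : 'I_n.+1) (A : {set 'I_n.+1}) :
  #|[set i | lift r i \in A]| = #|A :\ r|.
Proof.
rewrite -(card_imset _ (@lift_inj _ r)); apply: eq_card => i.
rewrite !inE; case: (unliftP r i) => [i' ->|->].
  by rewrite (mem_imset _ _ (@lift_inj _ r)) inE (eq_sym (lift r i')) neq_lift.
apply/imsetP/andP => -[] => [i' _ /eqP|]; last by rewrite eqxx.
by rewrite (negbTE (neq_lift r i')).
Qed.

Notation KK p m := (cart_rel (@K_rel p) (@K_rel m)).

Section Grid.
Variables p m : nat.
Implicit Types (S : {set 'I_p * 'I_m}) (a : 'I_p) (b : 'I_m).

Definition row S a : {set 'I_m} := [set j | (a, j) \in S].
Definition col S b : {set 'I_p} := [set i | (i, b) \in S].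

Lemma nbr_in_KK S a b :
  nbr_in (KK p m) S (a, b) =
  [set (a, j) | j in row S a :\ b] :|: [set (i, b) | i in col S b :\ a].
Proof.
apply/setP => -[i j]; rewrite /nbr_in /cart_rel /K_rel !inE /=.
apply/andP/orP => [[ijS /orP[/andP[/eqP ai jb]|/andP[/eqP bj ia]]]|].
- by left; apply/imsetP; exists j; rewrite ?ai // !inE eq_sym jb ijS.
- by right; apply/imsetP; exists i; rewrite ?bj // !inE eq_sym ia ijS.
by case=> /imsetP[k]; rewrite !inE => /andP[kb kS] [-> ->]; rewrite kS eqxx eq_sym kb ?orbT.
Qed.

Lemma card_nbr_in_KK S a b :
  #|nbr_in (KK p m) S (a, b)| = #|row S a :\ b| + #|col S b :\ a|.
Proof.
rewrite nbr_in_KK cardsU !card_imset; try by move=> ? ? [].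
suff -> : [set (a, j) | j in row S a :\ b] :&: [set (i, b) | i in col S b :\ a] = set0.
  by rewrite cards0 subn0.
apply/setP => u; rewrite !inE; apply/andP => -[/imsetP[j jS ->] /imsetP[i iS [ai jb]]].
by move: jS; rewrite jb !inE eqxx.
Qed.

Lemma total2dom_KKP S :
  reflect (forall a b, 2 <= #|row S a :\ b| + #|col S b :\ a|) (total2dom (KK p m) S).
Proof.
apply: (iffP forallP) => [dom a b|dom [a b]]; last by rewrite card_nbr_in_KK.
by rewrite -card_nbr_in_KK.
Qed.

Lemma card_pairs S : #|S| = \sum_a \sum_b (if (a, b) \in S then 1 else 0).
Proof.
rewrite -sum1_card big_mkcond (pair_bigA _ (fun a b => if (a, b) \in S then 1 else 0)).
by apply: eq_bigr => -[a b] _.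
Qed.

Lemma card_rows S : #|S| = \sum_a #|row S a|.
Proof.
rewrite card_pairs; apply: eq_bigr => a _.
by rewrite /row -sum1dep_card [RHS]big_mkcond.
Qed.

Lemma card_cols S : #|S| = \sum_b #|col S b|.
Proof.
rewrite card_pairs exchange_big; apply: eq_bigr => b _.
by rewrite /col -sum1dep_card [RHS]big_mkcond.
Qed.

Lemma exists_sparse_row S : #|S| < 2 * p -> exists a, #|row S a| <= 1.
Proof.
move=> small; apply/existsP; apply: contraLR small; rewrite negb_exists -leqNgt => /forallP dense.
rewrite card_rows mulnC -[p in p * 2]card_ord -sum_nat_const.
by apply: leq_sum => a _; rewrite ltnNge dense.
Qed.

End Grid.

Section Rows.
Variables (n m : nat) (r : 'I_n.+1).
Implicit Types (S : {set 'I_n.+1 * 'I_m}) (U : {set 'I_n * 'I_m}).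

Definition del_row S : {set 'I_n * 'I_m} := [set u | (lift r u.1, u.2) \in S].

Definition ins_row (R : {set 'I_m}) U : {set 'I_n.+1 * 'I_m} :=
  [set u | if unlift r u.1 is Some i then (i, u.2) \in U else u.2 \in R].

Lemma row_del_row S a : row (del_row S) a = row S (lift r a).
Proof. by apply/setP => j; rewrite !inE. Qed.

Lemma col_del_row S b : col (del_row S) b = [set i | lift r i \in col S b].
Proof. by apply/setP => i; rewrite !inE. Qed.

Lemma card_del_row S : #|del_row S| + #|row S r| = #|S|.
Proof.
rewrite [RHS]card_rows (bigD1_ord r) //= addnC card_rows.
by apply/congr1/eq_bigr => a _; rewrite row_del_row.
Qed.

Lemma del_ins_row R U : del_row (ins_row R U) = U.
Proof. by apply/setP => -[a b]; rewrite !inE liftK. Qed.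

Lemma row_ins_row R U : row (ins_row R U) r = R.
Proof. by apply/setP => j; rewrite !inE unlift_none. Qed.

Lemma card_ins_row R U : #|ins_row R U| = #|U| + #|R|.
Proof. by rewrite -card_del_row del_ins_row row_ins_row. Qed.

Lemma card_nbr_del_row S a b :
  #|nbr_in (KK n m) (del_row S) (a, b)| <= #|nbr_in (KK n.+1 m) S (lift r a, b)|
    <= #|nbr_in (KK n m) (del_row S) (a, b)| + ((r, b) \in S).
Proof.
have colE : col (del_row S) b :\ a = [set i | lift r i \in col S b :\ lift r a].
  by apply/setP => i; rewrite !inE (inj_eq (@lift_inj _ r)).
rewrite !card_nbr_in_KK row_del_row colE card_preim_lift.
rewrite (cardsD1 r (col S b :\ lift r a)) !inE (neq_lift r a) /=.
by rewrite leq_add2l leq_addl addnA addnAC leqnn.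
Qed.

Lemma row_setU1_lift S k c : row ((lift r k, c) |: S) r = row S r.
Proof.
by apply/setP => j; rewrite !inE xpair_eqE (negbTE (neq_lift r k)).
Qed.

Lemma total2dom_ins_row a0 U :
  total2dom (KK n m) U -> total2dom (KK n.+1 m) (ins_row (row U a0) U).
Proof.
move=> domU; apply/forallP => -[a b]; case: (unliftP r a) => [a' ->|->].
  apply: leq_trans (forallP domU (a', b)) _.
  by have /andP[+ _] := card_nbr_del_row (ins_row (row U a0) U) a' b; rewrite del_ins_row.
have /total2dom_KKP/(_ a0 b) := domU.
rewrite card_nbr_in_KK row_ins_row => /leq_trans; apply; rewrite leq_add2l.
rewrite -card_preim_lift -col_del_row del_ins_row.
exact: subset_leq_card (subsetDl _ _).
Qed.

Lemma total2dom_del_row S :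
  row S r = set0 -> total2dom (KK n.+1 m) S -> total2dom (KK n m) (del_row S).
Proof.
move=> rowr domS; apply/forallP => -[a b].
have : b \notin row S r by rewrite rowr inE.
rewrite inE => /negbTE rbS.
have /andP[_] := card_nbr_del_row S a b; rewrite rbS addn0.
exact: leq_trans (forallP domS (lift r a, b)).
Qed.

Lemma total2dom_del_row_move S c k :
  row S r = [set c] -> (lift r k, c) \notin S -> total2dom (KK n.+1 m) S ->
  total2dom (KK n m) (del_row ((lift r k, c) |: S)).
Proof.
move=> rowr kcS domS; set U := _ |: S.
apply/forallP => -[a b]; case: (eqVneq b c) => [->|bc].
  have col_c : 2 <= #|col S c :\ r|.
    by have /total2dom_KKP/(_ r c) := domS; rewrite rowr setDv cards0.
  have colU_c : col U c :\ r = lift r k |: (col S c :\ r).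
    apply/setP => i; rewrite !inE xpair_eqE eqxx andbT.
    by case: (eqVneq i (lift r k)) => [->|//]; rewrite eq_sym (neq_lift r k).
  have : 3 <= #|col (del_row U) c|.
    by rewrite col_del_row card_preim_lift colU_c cardsU1 !inE (negbTE kcS) andbF.
  rewrite card_nbr_in_KK (cardsD1 a) => col3; apply: leq_trans (leq_addl _ _).
  by rewrite -(leq_add2l 1) (leq_trans col3) // leq_add2r leq_b1.
apply: leq_trans (forallP domS (lift r a, b)) _.
apply: leq_trans (subset_leq_card (nbr_inS _ _ (subsetUr [set (lift r k, c)] S))) _.
have : b \notin row U r by rewrite row_setU1_lift rowr inE.
rewrite inE => /negbTE rbU.
by have /andP[_] := card_nbr_del_row U a b; rewrite rbU addn0.
Qed.

Lemma exists_free_in_col S c :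
  n <= m -> #|S| < 2 * n -> row S r = [set c] -> total2dom (KK n.+1 m) S ->
  exists k, (lift r k, c) \notin S.
Proof.
move=> le_nm small rowr domS; apply/existsP; apply: contraLR small.
rewrite negb_exists -leqNgt => /forallP col_c_full.
have col_cT : col S c = setT.
  apply/setP => i; rewrite !inE; case: (unliftP r i) => [i' ->|->].
    by have := col_c_full i'; rewrite negbK.
  by have := set11 c; rewrite -rowr inE.
have col_gt0 j : 0 < #|col S j|.
  have row_le1 : #|row S r :\ j| <= 1 by rewrite rowr -(cards1 c) subset_leq_card ?subsetDl.
  have col_le : #|col S j :\ r| <= #|col S j| by rewrite subset_leq_card ?subsetDl.
  rewrite -(ltn_add2l 1) addn0; apply: leq_trans (leq_add row_le1 col_le).
  exact: (total2dom_KKP S) domS r j.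
rewrite card_cols (bigD1 c) //= col_cT cardsT card_ord.
have : \sum_(j | j != c) 1 <= \sum_(j | j != c) #|col S j| by apply: leq_sum => j _.
rewrite sum1_card cardC1 card_ord.
move=> /(leq_add (leqnn n.+1)); apply: leq_trans; have := ltn_ord c; lia.
Qed.

Lemma gKK_le_of_sparse_row S :
  n <= m -> #|S| < 2 * n -> #|row S r| <= 1 -> total2dom (KK n.+1 m) S -> gKK n m <= #|S|.
Proof.
move=> le_nm small sparse domS.
have /orP[/eqP/cards0_eq rowr|/cards1P[c rowr]] : (#|row S r| == 0) || (#|row S r| == 1).
  by case: #|_| sparse => [|[]].
  apply: leq_trans (gamma2t_le (total2dom_del_row rowr domS)) _.
  by rewrite -(card_del_row S) rowr cards0 addn0.
have [k kcS] := exists_free_in_col le_nm small rowr domS.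
apply: leq_trans (gamma2t_le (total2dom_del_row_move rowr kcS domS)) _.
have := card_del_row ((lift r k, c) |: S).
by rewrite row_setU1_lift rowr cards1 cardsU1 kcS addnC => /addnI ->.
Qed.

Lemma gKK_succ_le_of_row U a0 :
  total2dom (KK n m) U -> gKK n.+1 m <= #|U| + #|row U a0|.
Proof.
move=> domU; rewrite -card_ins_row.
exact: gamma2t_le (total2dom_ins_row a0 domU).
Qed.

End Rows.

Lemma gKK_optimal p m : gKK p m <= p * m ->
  exists2 S : {set 'I_p * 'I_m}, total2dom (KK p m) S & #|S| = gKK p m.
Proof. by move=> le_pm; apply: gamma2t_attained; rewrite card_prod !card_ord. Qed.

Lemma gKK_succ_le n m : 2 <= m -> gKK n m < 2 * n -> gKK n.+1 m <= (gKK n m).+1.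
Proof.
move=> m2 small; have [|S domS Sopt] := gKK_optimal (m := m) (p := n).
  by apply: ltnW (leq_trans small _); rewrite mulnC leq_mul2l m2 orbT.
rewrite -Sopt in small *; have [a sparse] := exists_sparse_row small.
apply: leq_trans (gKK_succ_le_of_row ord0 a domS) _.
by rewrite -addn1 leq_add2l.
Qed.

Lemma gKK_le_succ n m : n <= m -> gKK n.+1 m < 2 * n -> gKK n m <= gKK n.+1 m.
Proof.
move=> le_nm small; have [|S domS Sopt] := gKK_optimal (m := m) (p := n.+1).
  by apply: ltnW (leq_trans small _); nia.
rewrite -Sopt in small *.
have [r sparse] : exists r, #|row S r| <= 1.
  by apply: exists_sparse_row; apply: ltn_trans small _; rewrite ltn_pmul2l.
exact: gKK_le_of_sparse_row le_nm small sparse domS.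
Qed.

Theorem mainTheorem6 (n m : nat) (h2n : 2 <= n) (hnm : n <= m)
  (hlt : gKK n m < 2 * n) :
  gKK n m <= gKK n.+1 m <= (gKK n m).+1.
Proof.
apply/andP; split; last exact: gKK_succ_le (leq_trans h2n hnm) hlt.
have [le2n|lt2n] := leqP (2 * n) (gKK n.+1 m); first exact: ltnW (leq_trans hlt le2n).
exact: gKK_le_succ.
Qed.
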